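(* Let $K$ be a finite oriented simplicial complex and let $p,q$ be integers with $0\le p\le q$. Fix the bases of $C_m(K)$ given by the oriented $m$-simplices, and for integers $m\ge k\ge 0$ let $B_{m,k}=(b^{(m,k)}_{ij})$ be the matrix of $\partial_{m,k}\colon C_m(K)\to C_{m-k}(K)$ in these bases (rows indexed by $(m-k)$-simplices, columns by $m$-simplices). Then for every $q$-simplex $\sigma_j^{(q)}$, $$\deg_L^p(\sigma_j^{(q)})= -1+\sum_{q'=p}^{\dim K}\sum_k\min\Big(1,\sum_{i}|b_{ij}^{(q,h)}|\,|b^{(q',h')}_{ik}|\Big),$$ where $h=q-p$, $h'=q'-p$, $i$ runs over the $p$-simplices and $k$ over the $q'$-simplices of $K$.
   Context: $K$ is a finite abstract simplicial complex (finite family of nonempty finite vertex sets closed under nonempty subsets); a $q$-simplex has $q+1$ vertices; a face is a simplex of $K$ contained in a given simplex (a simplex is a face of itself); $\dim K$ is the maximal dimension of a simplex. Orientations: orderings of vertices modulo even permutations, $[v_{\eta(0)},\dots,v_{\eta(m)}]=\operatorname{sign}(\eta)[v_0,\dots,v_m]$; each simplex has a fixed orientation; $C_m(K)$ is the real vector space with basis the oriented $m$-simplices (opposite orientation = negative). Multi-parameter boundary operator: for $m\ge k\ge0$, $\partial_{m,k}\colon C_m(K)\to C_{m-k}(K)$ is linear with $\partial_{m,k}([v_{\eta(0)},\dots,v_{\eta(m)}])=\sum_{J}\operatorname{sign}(\eta)\operatorname{sign}(\epsilon_J)[v_0,\dots,\widehat{v_{j_1}},\dots,\widehat{v_{j_k}},\dots,v_m]$,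 summing over subsets $J=\{j_1<\dots<j_k\}\subseteq\{0,\dots,m\}$ (hatted vertices removed, others in increasing order), $\epsilon_J$ the permutation of $\{0,\dots,m\}$ with $r\mapsto j_{r+1}$ for $r<k$ and $k,\dots,m$ mapped increasingly onto the complement of $J$. In particular $\partial_{m,0}$ is the identity, and the entry $b^{(m,k)}_{ij}$ is $\pm1$ if the $i$-th $(m-k)$-simplex is a face of the $j$-th $m$-simplex and $0$ otherwise. $p$-lower adjacency: two simplices are $p$-lower adjacent if they have a common $p$-face. The $p$-lower degree $\deg_L^p(\sigma^{(q)})$ is the number of simplices of $K$ (of any dimension), other than $\sigma^{(q)}$ itself, that are $p$-lower adjacent to $\sigma^{(q)}$ (a simplex is not considered $p$-lower adjacent to itself). *)

From mathcomp Require Import all_boot all_order all_algebra.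
Set Implicit Arguments. Unset Strict Implicit. Unset Printing Implicit Defensive.
Import Order.TTheory GRing.Theory Num.Theory.

Definition is_complex (V : finType) (K : {set {set V}}) : Prop :=
  (forall s : {set V}, s \in K -> s != set0) /\
  (forall s t : {set V}, s \in K -> t \subset s -> t != set0 -> t \in K).

Definition simplices (V : finType) (K : {set {set V}}) (q : nat) : {set {set V}} :=
  [set s in K | #|s| == q.+1].

Definition dimK (V : finType) (K : {set {set V}}) : nat :=
  \max_(s in K) #|s|.-1.

(* An orientation: for each simplex, a fixed ordering of its vertices. *)
Definition is_orientation (V : finType) (K : {set {set V}}) (o : {set V} -> seq V) : Prop :=
  forall s : {set V}, s \in K -> perm_eq (o s) (enum s).

(* Number of inversions of a sequence of naturals (one-line notation of a
   permutation); the sign of the permutation is (-1)^inversions. *)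
Definition inversions (s : seq nat) : nat :=
  \sum_(i < size s) \sum_(j < size s | i < j) (nth 0 s j < nth 0 s i).

Definition sgn_seq (s : seq nat) : int := (-1) ^+ inversions s.

(* The permutation eps_J in one-line notation: j_1,...,j_k followed by the
   complement of J in {0..m} in increasing order. *)
Definition eps_seq (m : nat) (J : {set 'I_m.+1}) : seq nat :=
  [seq val j | j <- enum J] ++ [seq val j | j <- enum (~: J)].

Definition remove_pos (V : eqType) (w : seq V) (J : seq nat) : seq V :=
  mask [seq (i \notin J) | i <- iota 0 (size w)] w.

(* Coefficient of the (fixed-orientation) simplex tau in the oriented
   simplex [w]: sign(eta) if w = [v_eta(0),...] with (v_0,...) = o tau. *)
Definition orient_coef (V : finType) (o : {set V} -> seq V) (w : seq V) (tau : {set V}) : int :=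
  if [set x in w] == tau then sgn_seq [seq index x (o tau) | x <- w] else 0.

(* b^{(m,k)}_{tau sigma}: coefficient of tau in the multi-parameter boundary
   d_{m,k}(sigma) of the m-simplex sigma (with its fixed orientation o sigma). *)
Definition bnd (V : finType) (o : {set V} -> seq V) (m k : nat)
    (tau sigma : {set V}) : int :=
  \sum_(J : {set 'I_m.+1} | #|J| == k)
     sgn_seq (eps_seq J) *
     orient_coef o (remove_pos (o sigma) [seq val j | j <- enum J]) tau.

Definition lower_adj (V : finType) (K : {set {set V}}) (p : nat) (s t : {set V}) : bool :=
  [exists f in simplices K p, (f \subset s) && (f \subset t)].

Definition lower_deg (V : finType) (K : {set {set V}}) (p : nat) (sigma : {set V}) : nat :=
  #|[set t in K | (t != sigma) && lower_adj K p sigma t]|.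

From mathcomp Require Import all_boot all_order all_algebra.
Import Order.TTheory GRing.Theory Num.Theory.
Set Implicit Arguments. Unset Strict Implicit. Unset Printing Implicit Defensive.
Local Open Scope ring_scope.

(* If the ordered simplex [w] has [m+1] vertices and [tau] has [m+1-k], then
   the only choice of [k] removed positions that can produce [tau] is the set
   of positions of the vertices outside [tau]; it does so iff [tau] is a face.
   So |b^(m,k)_{tau sigma}| is the incidence indicator, the sum of products
   counts the common p-faces of [sigma] and [kappa], and its truncation at 1
   is the indicator of p-lower adjacency.  Summing over all [kappa] of
   dimension at least [p] thus counts the p-lower neighbours of [sigma] and,
   since [p <= q] gives [sigma] a p-face, [sigma] itself: hence the [-1]. *)

Definition face (V : finType) (n : nat) (w : seq V) (J : {set 'I_n}) :
    {set V} :=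
  [set x in remove_pos w [seq val j | j <- enum J]].

Section OrderedSimplexFaces.

Variables (V : finType) (n : nat) (w : seq V) (x0 : V).
Hypotheses (w_uniq : uniq w) (size_w : size w = n).

Let vertex (i : 'I_n) : V := nth x0 w i.

Let vertex_inj : injective vertex.
Proof. by move=> i j /eqP; rewrite nth_uniq ?size_w // => /eqP/val_inj. Qed.

Lemma faceE (J : {set 'I_n}) : face w J = [set nth x0 w i | i : 'I_n in ~: J].
Proof.
apply/setP => x; rewrite inE /remove_pos -{2}(mkseq_nth x0 w) /mkseq -map_mask.
rewrite -filter_mask size_w; apply/mapP/imsetP => [[i]|[i]].
- rewrite mem_filter mem_iota => /andP[i_nJ /andP[_ lt_in]] ->.
  by exists (Ordinal lt_in); rewrite // inE -mem_enum -(mem_map val_inj).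
- rewrite inE => i_nJ ->; exists (val i) => //.
  by rewrite mem_filter mem_iota ltn_ord (mem_map val_inj) mem_enum i_nJ.
Qed.

Lemma card_face (J : {set 'I_n}) : (#|face w J| + #|J|)%N = n.
Proof. by rewrite faceE card_imset // addnC cardsC card_ord. Qed.

Lemma face_sub (J : {set 'I_n}) : face w J \subset [set x in w].
Proof.
rewrite faceE; apply/subsetP => _ /imsetP[i _ ->].
by rewrite inE mem_nth ?size_w.
Qed.

Lemma face_inj : injective (@face V n w).
Proof.
by move=> J1 J2; rewrite !faceE => /(imset_inj vertex_inj)/(can_inj setCK).
Qed.

Lemma face_eqE (J : {set 'I_n}) (T : {set V}) : T \subset [set x in w] ->
  (face w J == T) = (J == ~: [set i : 'I_n | nth x0 w i \in T]).
Proof.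
move=> sub_T; have {1}<- : face w (~: [set i | vertex i \in T]) = T.
  rewrite faceE setCK; apply/setP => x; apply/imsetP/idP => [[i] | x_T].
  - by rewrite inE => ? ->.
  - have x_w : x \in w by rewrite -[_ \in w]inE (subsetP sub_T).
    have lt_xn : (index x w < n)%N by rewrite -size_w index_mem.
    by exists (Ordinal lt_xn); rewrite ?inE /vertex /= nth_index.
by rewrite (inj_eq face_inj).
Qed.

End OrderedSimplexFaces.

Lemma normr_sgn_seq (s : seq nat) : `|sgn_seq s| = 1.
Proof. by rewrite normrX normrN1 expr1n. Qed.

Lemma normr_orient_coef (V : finType) (o : {set V} -> seq V) (w : seq V) tau :
  `|orient_coef o w tau| = ([set x in w] == tau)%:R.
Proof. by rewrite /orient_coef; case: eqP; rewrite ?normr_sgn_seq. Qed.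

Lemma normr_bnd (V : finType) (K : {set {set V}}) (o : {set V} -> seq V)
    (m k : nat) (tau sigma : {set V}) :
  is_orientation K o -> sigma \in K ->
  #|sigma| = m.+1 -> (#|tau| + k)%N = m.+1 ->
  `|bnd o m k tau sigma| = (tau \subset sigma)%:R.
Proof.
move=> oK sigma_K card_sigma card_tau; have o_sigma := oK _ sigma_K.
have size_w : size (o sigma) = m.+1 by rewrite (perm_size o_sigma) -cardE.
have w_uniq : uniq (o sigma) by rewrite (perm_uniq o_sigma) enum_uniq.
have w_sigma : [set x in o sigma] = sigma.
  by apply/setP => x; rewrite inE (perm_mem o_sigma) mem_enum.
have /card_gt0P[x0 _] : (0 < #|sigma|)%N by rewrite card_sigma.
rewrite /bnd (bigID (fun J => face (o sigma) J == tau)) /=.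
rewrite [X in _ + X]big1 ?addr0 => [|J /andP[_ face_J]]; last first.
  by rewrite /orient_coef ifN ?mulr0.
have [tau_sub | tau_nsub] := boolP (tau \subset sigma); last first.
  rewrite big_pred0 ?normr0 // => J; apply/andP => -[_ /eqP face_J].
  by case/negP: tau_nsub; have := face_sub x0 size_w J; rewrite w_sigma face_J.
rewrite -w_sigma in tau_sub.
set J0 := ~: [set i : 'I_m.+1 | nth x0 (o sigma) i \in tau].
rewrite (big_pred1 J0) => [|J]; last first.
  rewrite /= -(face_eqE x0 w_uniq size_w _ tau_sub) andb_idl // => /eqP face_J.
  by rewrite -(eqn_add2l #|tau|) card_tau -{1}face_J card_face.
rewrite normrM normr_sgn_seq normr_orient_coef mul1r.
by rewrite (face_eqE x0 w_uniq size_w) // eqxx.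
Qed.

Lemma sumr_indicator (R : pzSemiRingType) (T : finType) (P b : pred T) :
  \sum_(x | P x) (b x)%:R = #|[set x | P x && b x]|%:R :> R.
Proof. by rewrite -natr_sum -sum1dep_card big_mkcondr. Qed.

Lemma minr1_natr (R : realDomainType) (n : nat) :
  Num.min 1 n%:R = (0 < n)%N%:R :> R.
Proof. by case: n => [|n]; [rewrite min_r | rewrite min_l ?ler1n]. Qed.

Section LowerAdjacency.

Variables (V : finType) (K : {set {set V}}) (p : nat).

Lemma lower_adj_card (s t : {set V}) : lower_adj K p s t -> (p < #|t|)%N.
Proof.
case/existsP=> f /and3P[]; rewrite inE => /andP[_ /eqP card_f] _.
by move/subset_leq_card; rewrite card_f.
Qed.

Lemma lower_adj_refl (s : {set V}) : is_complex K ->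
  s \in K -> (p < #|s|)%N -> lower_adj K p s s.
Proof.
move=> [_ K_closed] s_K lt_ps; set f := [set x in take p.+1 (enum s)].
have f_sub : f \subset s.
  by apply/subsetP => x; rewrite inE => /mem_take; rewrite mem_enum.
have card_f : #|f| = p.+1.
  rewrite cardsE (card_uniqP (take_uniq _ (enum_uniq _))) size_take -cardE.
  by rewrite ltn_neqAle lt_ps andbT; case: eqP => // ->.
apply/existsP; exists f; rewrite f_sub inE card_f eqxx (K_closed s) //.
by rewrite -card_gt0 card_f.
Qed.

Lemma min1_sum_bnd_lower_adj (o : {set V} -> seq V) (q q' : nat)
    (sigma kappa : {set V}) :
  is_orientation K o -> (p <= q)%N -> (p <= q')%N ->
  sigma \in simplices K q -> kappa \in simplices K q' ->
  Num.min 1 (\sum_(i in simplices K p)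
               `|bnd o q (q - p) i sigma| * `|bnd o q' (q' - p) i kappa|)
    = (lower_adj K p sigma kappa)%:R.
Proof.
move=> oK le_pq le_pq'; rewrite !inE => /andP[sigma_K /eqP card_sigma].
case/andP=> kappa_K /eqP card_kappa.
pose common (f : {set V}) := (f \subset sigma) && (f \subset kappa).
rewrite (eq_bigr (fun f => (common f)%:R)) => [|f].
  rewrite sumr_indicator minr1_natr card_gt0; congr ((_ : bool)%:R).
  by rewrite /lower_adj; apply/set0Pn/existsP => -[f f_in]; exists f;
    move: f_in; rewrite !inE.
rewrite inE => /andP[_ /eqP card_f].
by rewrite !(normr_bnd oK) ?card_f ?addSn ?subnKC // -natrM mulnb.
Qed.

End LowerAdjacency.

Lemma sum_simplices_from (R : nmodType) (V : finType) (K : {set {set V}})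
    (p : nat) (F : {set V} -> R) :
  (forall s, s \in K -> s != set0) ->
  \sum_(p <= q < (dimK K).+1) \sum_(s in simplices K q) F s
    = \sum_(s in K | (p < #|s|)%N) F s.
Proof.
move=> K_nonempty; rewrite big_mkcondr.
rewrite (exchange_big_dep (mem K)) /= => [|q s _]; last by case/setIdP.
apply: eq_bigr => s s_K.
have card_s : #|s| = (#|s|.-1).+1 by rewrite prednK // card_gt0 K_nonempty.
rewrite (eq_bigl (fun q => q == #|s|.-1)) => [|q]; last first.
  by rewrite inE s_K card_s eqSS.
have le_s_dim : (#|s| <= (dimK K).+1)%N.
  by rewrite card_s ltnS; exact: leq_bigmax_cond.
by rewrite big_nat1_eq -ltnS -card_s le_s_dim andbT.
Qed.

Theorem theoremt (V : finType) (K : {set {set V}}) (o : {set V} -> seq V)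
  (p q : nat) (sigma : {set V}) :
  is_complex K -> is_orientation K o -> (p <= q)%N ->
  sigma \in simplices K q ->
  (lower_deg K p sigma)%:Z =
    -1 + \sum_(p <= q' < (dimK K).+1)
           \sum_(kappa in simplices K q')
             Num.min 1 (\sum_(i in simplices K p)
                          `|bnd o q (q - p) i sigma| * `|bnd o q' (q' - p) i kappa|).
Proof.
move=> K_complex oK le_pq sigma_q.
have /andP[sigma_K /eqP card_sigma] : (sigma \in K) && (#|sigma| == q.+1).
  by rewrite inE in sigma_q.
rewrite (eq_big_nat _ _ (fun q' q'_range => eq_bigr _ (fun kappa kappa_q' =>
  min1_sum_bnd_lower_adj oK le_pq (andP q'_range).1 sigma_q kappa_q'))).
rewrite sum_simplices_from ?sumr_indicator; last by case: K_complex.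
have -> : [set s | (s \in K) && (p < #|s|)%N && lower_adj K p sigma s]
        = sigma |: [set t in K | (t != sigma) && lower_adj K p sigma t].
  apply/setP => t; rewrite !inE; have [-> | _] /= := eqVneq t sigma.
    by rewrite sigma_K card_sigma ltnS le_pq lower_adj_refl ?card_sigma.
  have [/lower_adj_card -> | _] := boolP (lower_adj K p sigma t).
    by rewrite andbT.
  by rewrite !andbF.
by rewrite cardsU1 !inE eqxx andbF /= natrD addrA addNr add0r natz.
Qed.
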